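(* Let $K\ge2$, $r\in[0,1]^K$ with a unique maximizing index $a^*$, $\pi^*$ the point mass on $a^*$, and $g(\theta)=\pi_\theta^\top r$ with $\pi_\theta=\mathrm{softmax}(\theta)$. Let $\theta_1\in\mathbb{R}^K$ and $\theta_{t+1}=\theta_t+\eta\,\nabla g(\theta_t)/\|\nabla g(\theta_t)\|_2$ with $\eta=1/6$. Then $c:=\inf_{t\ge1}\pi_{\theta_t}(a^* )>0$ (a constant depending on $r$ and $\theta_1$ but not on $t$), and for all $t\ge1$, $$(\pi^*-\pi_{\theta_t})^\top r\le e^{-\frac{c\,(t-1)}{12}}\,(\pi^*-\pi_{\theta_1})^\top r.$$
   Context: $\mathrm{softmax}(\theta)(a)=e^{\theta(a)}/\sum_{a'}e^{\theta(a')}$. *)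

From mathcomp Require Import all_boot all_order all_algebra.
From mathcomp Require Import all_classical all_reals all_analysis.
Set Implicit Arguments. Unset Strict Implicit. Unset Printing Implicit Defensive.
Import Order.TTheory GRing.Theory Num.Theory.
Local Open Scope ring_scope.
Local Open Scope classical_set_scope.

Section Defs.
Variables (R : realType) (K : nat).

Definition softmax (theta : 'I_K -> R) (a : 'I_K) : R :=
  expR (theta a) / \sum_(b < K) expR (theta b).

Definition value (r : 'I_K -> R) (theta : 'I_K -> R) : R :=
  \sum_(a < K) softmax theta a * r a.

Definition partial (f : ('I_K -> R) -> R) (theta : 'I_K -> R) (a : 'I_K) : R :=
  derive1 (fun h : R => f (fun b => theta b + (if b == a then h else 0))) 0.

Definition grad (f : ('I_K -> R) -> R) (theta : 'I_K -> R) : 'I_K -> R :=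
  fun a => partial f theta a.

Definition norm2 (v : 'I_K -> R) : R := Num.sqrt (\sum_(a < K) v a ^+ 2).

Definition npg_step (r : 'I_K -> R) (eta : R) (theta : 'I_K -> R) : 'I_K -> R :=
  fun a => theta a + eta * (grad (value r) theta a / norm2 (grad (value r) theta)).

Definition point_mass (astar : 'I_K) : 'I_K -> R :=
  fun a => if a == astar then 1 else 0.

Definition gap (r : 'I_K -> R) (astar : 'I_K) (theta : 'I_K -> R) : R :=
  \sum_(a < K) (point_mass astar a - softmax theta a) * r a.

End Defs.

From mathcomp Require Import all_boot all_order all_algebra.
From mathcomp Require Import all_classical all_reals all_analysis.
From mathcomp Require Import ring lra.
Set Implicit Arguments. Unset Strict Implicit. Unset Printing Implicit Defensive.
Import Order.TTheory GRing.Theory Num.Theory.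
Local Open Scope ring_scope.
Local Open Scope classical_set_scope.

(* The gradient of g is (pi_a (r_a - g))_a.  Since (e^x - 1) x >= (5/6) x^2
   for |x| <= 1/6, a normalized step of length 1/6 raises g by at least
   |grad g| / 12, and |grad g| >= pi(astar) * gap; so every step multiplies
   the gap by at most 1 - pi(astar)/12 <= exp (-c/12).  It remains to see
   c > 0.  The values g(theta_t) increase; if their supremum L were below
   r(astar), then once g(theta_t) is close to L every arm with r_a < L has a
   negative gradient coordinate of size proportional to pi_a, so the odds
   sum_{r_a < L} pi_a / pi(astar) decay geometrically -- yet they stay above
   r(astar) - L.  Hence the gap tends to 0, pi_t(astar) eventually exceeds
   1/2, and c is at least the minimum of 1/2 and finitely many positive
   numbers. *)

Section Softmax.
Variables (R : realType) (K : nat).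
Hypothesis K_gt0 : (0 < K)%N.
Implicit Types (th x : 'I_K -> R).

Lemma sum_ord_gt0 (f : 'I_K -> R) : (forall b, 0 < f b) -> 0 < \sum_(b < K) f b.
Proof.
move=> f_gt0; rewrite (bigD1 (Ordinal K_gt0)) //= ltr_pwDl //.
by rewrite sumr_ge0 // => b _; rewrite ltW.
Qed.

Lemma sum_expR_gt0 th : 0 < \sum_(b < K) expR (th b).
Proof. by apply: sum_ord_gt0 => b; rewrite expR_gt0. Qed.

Lemma softmax_gt0 th a : 0 < softmax th a.
Proof. by rewrite divr_gt0 ?expR_gt0 ?sum_expR_gt0. Qed.

Lemma softmax_ge0 th a : 0 <= softmax th a.
Proof. exact/ltW/softmax_gt0. Qed.

Lemma sum_softmax th : \sum_(a < K) softmax th a = 1.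
Proof. by rewrite -mulr_suml divff // gt_eqF ?sum_expR_gt0. Qed.

Lemma expR_sub_softmax th a b : expR (th a - th b) = softmax th a / softmax th b.
Proof.
have := sum_expR_gt0 th; have := expR_gt0 (th b).
rewrite expRD expRN /softmax => eb_gt0 Z_gt0.
by field; rewrite !gt_eqF.
Qed.

Lemma softmax_shift th x a :
  softmax (fun b => th b + x b) a =
  softmax th a * expR (x a) / \sum_(b < K) softmax th b * expR (x b).
Proof.
have Z_gt0 := sum_expR_gt0 th.
have Zx_gt0 := sum_expR_gt0 (fun b => th b + x b).
have -> : \sum_(b < K) softmax th b * expR (x b) =
    (\sum_(b < K) expR (th b + x b)) / \sum_(b < K) expR (th b).
  by rewrite mulr_suml; apply: eq_bigr => b _; rewrite expRD mulrAC.
by rewrite /softmax expRD; field; rewrite !gt_eqF.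
Qed.

End Softmax.

Section Value.
Variables (R : realType) (K : nat) (r : 'I_K -> R).
Hypothesis K_gt0 : (0 < K)%N.
Implicit Types (th x : 'I_K -> R).

Lemma sum_softmax_centered th :
  \sum_(a < K) softmax th a * (r a - value r th) = 0.
Proof.
under eq_bigr => a _ do rewrite mulrBr.
by rewrite sumrB -mulr_suml sum_softmax // mul1r subrr.
Qed.

Lemma value_shift th x :
  value r (fun a => th a + x a) - value r th =
  (\sum_(a < K) softmax th a * expR (x a) * (r a - value r th)) /
  \sum_(a < K) softmax th a * expR (x a).
Proof.
set D := \sum_(a < K) softmax th a * expR (x a).
have D_gt0 : 0 < D by apply: sum_ord_gt0 => // a; rewrite mulr_gt0 ?softmax_gt0 ?expR_gt0.
have -> : value r (fun a => th a + x a) =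
    (\sum_(a < K) softmax th a * expR (x a) * r a) / D.
  by rewrite mulr_suml; apply: eq_bigr => a _; rewrite softmax_shift // mulrAC.
apply: (@mulIf _ D); first by rewrite gt_eqF.
rewrite mulrBl !divfK ?gt_eqF // mulr_sumr -sumrB.
by apply: eq_bigr => a _; ring.
Qed.

Lemma is_derive_expR_coord th (a b : 'I_K) :
  is_derive (0 : R) 1 (fun h => expR (th b + (if b == a then h else 0)))
    (if b == a then expR (th b) else 0).
Proof.
case: eqP => _; last exact: is_derive_cst.
have -> : (fun h => expR (th b + h)) = expR \o shift (th b).
  by apply/funext => h /=; rewrite addrC.
rewrite -[X in is_derive _ _ _ X]mulr1.
apply: is_derive1_comp; last exact: is_derive_shift.
by rewrite /= add0r; exact: is_derive_expR.
Qed.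

Lemma grad_value th a : grad (value r) th a = softmax th a * (r a - value r th).
Proof.
pose F b h : R := expR (th b + (if b == a then h else 0)).
pose Num := \sum_(b < K) (fun h => F b h * r b).
pose Den := \sum_(b < K) F b.
have F0 b : F b 0 = expR (th b) by rewrite /F; case: eqP; rewrite addr0.
have Den0 : Den 0 = \sum_(b < K) expR (th b).
  by rewrite /Den fct_sumE; apply: eq_bigr => b _; rewrite F0.
have Num0 : Num 0 = \sum_(b < K) expR (th b) * r b.
  by rewrite /Num fct_sumE; apply: eq_bigr => b _; rewrite F0.
have dNum : is_derive (0 : R) 1 Num
    (\sum_(b < K) (if b == a then expR (th b) else 0) * r b).
  apply: is_derive_sum => b.
  have := is_deriveM (is_derive_expR_coord th a b) (is_derive_cst (r b) (0 : R) (1 : R)).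
  by move=> dM; apply: is_derive_eq; rewrite scaler0 add0r /= mulrC.
have dDen : is_derive (0 : R) 1 Den
    (\sum_(b < K) (if b == a then expR (th b) else 0)).
  apply: is_derive_sum => b; exact: is_derive_expR_coord.
have Den0_neq0 : Den 0 != 0 by rewrite Den0 gt_eqF ?sum_expR_gt0.
have dV := is_deriveV Den0_neq0 dDen.
have dM := is_deriveM dNum dV.
have valueE : (fun h => value r (fun b => th b + (if b == a then h else 0)))
    = Num * (fun h => (Den h)^-1).
  apply/funext => h; rewrite /Num /Den !fct_sumE [RHS]/GRing.mul /= /value mulr_suml.
  by apply: eq_bigr => b _; rewrite /softmax mulrAC.
rewrite /grad /partial derive1E valueE derive_val.
rewrite (bigD1 a) //= eqxx big1 => [|b /negbTE ->] //.
rewrite (bigD1 a (P := predT)) //= eqxx big1 => [|b /negbTE ->]; last by rewrite mul0r.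
rewrite !addr0 Den0 Num0 /value /softmax /GRing.scale /=.
have := sum_expR_gt0 K_gt0 th; set Z := \sum_(b < K) expR (th b) => Z_gt0.
have -> : \sum_(b < K) expR (th b) / Z * r b = (\sum_(b < K) expR (th b) * r b) / Z.
  by rewrite mulr_suml; apply: eq_bigr => b _; rewrite mulrAC.
by field; rewrite gt_eqF.
Qed.

End Value.

Section Norm2.
Variables (R : realType) (K : nat).
Implicit Types (v : 'I_K -> R).

Lemma norm2_sqr v : norm2 v ^+ 2 = \sum_(a < K) v a ^+ 2.
Proof. by rewrite sqr_sqrtr // sumr_ge0 // => a _; rewrite sqr_ge0. Qed.

Lemma abs_le_norm2 v a : `|v a| <= norm2 v.
Proof.
rewrite -sqrtr_sqr; apply: ler_wsqrtr.
by rewrite (bigD1 a) //= lerDl sumr_ge0 // => b _; rewrite sqr_ge0.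
Qed.

Lemma norm2_le_sum_abs v : norm2 v <= \sum_(a < K) `|v a|.
Proof.
have s_ge0 : 0 <= \sum_(a < K) `|v a| by apply: sumr_ge0.
rewrite -(ger0_norm s_ge0) -sqrtr_sqr; apply: ler_wsqrtr.
rewrite expr2 mulr_suml; apply: ler_sum => a _.
by rewrite -real_normK ?num_real // expr2 ler_wpM2l // (bigD1 a) //= lerDl sumr_ge0.
Qed.

Lemma sqr_sum_le_card_sum_sqr (P : pred 'I_K) v : (0 < K)%N ->
  (\sum_(a < K | P a) v a) ^+ 2 / K%:R <= \sum_(a < K | P a) v a ^+ 2.
Proof.
move=> K_gt0; have K_gt0R : 0 < (K%:R : R) by rewrite ltr0n.
set S := \sum_(a < K | P a) v a; set m := S / K%:R.
have tangent_le : \sum_(a < K | P a) (2 * m * v a - m ^+ 2) <= \sum_(a < K | P a) v a ^+ 2.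
  apply: ler_sum => a _; rewrite -subr_ge0.
  have -> : v a ^+ 2 - (2 * m * v a - m ^+ 2) = (v a - m) ^+ 2 by ring.
  exact: sqr_ge0.
have const_le : \sum_(a < K | P a) m ^+ 2 <= K%:R * m ^+ 2.
  have -> : K%:R * m ^+ 2 = \sum_(a < K) m ^+ 2 by rewrite sumr_const card_ord mulr_natl.
  rewrite [X in _ <= X](bigID P) /= lerDl.
  by apply: sumr_ge0 => a _; rewrite sqr_ge0.
rewrite sumrB -mulr_sumr -/S in tangent_le; apply: le_trans tangent_le.
have -> : S ^+ 2 / K%:R = 2 * m * S - K%:R * m ^+ 2 by rewrite /m; field; rewrite gt_eqF.
by rewrite lerD2l lerN2.
Qed.

End Norm2.

Section RealInequalities.
Variable R : realType.

Lemma expR_mul_expRN (x : R) : expR x * expR (- x) = 1.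
Proof. by rewrite -expRD subrr expR0. Qed.

Lemma expR_1_6_le : expR (1 / 6 : R) <= 6 / 5.
Proof.
have := expR_ge1Dx (- (1 / 6 : R)); have := expR_mul_expRN (1 / 6 : R).
have := expR_gt0 (1 / 6 : R); nra.
Qed.

Lemma expRN_le (y : R) : 0 <= y <= 1 -> expR (- y) <= 1 - y / 2.
Proof.
case/andP=> y_ge0 y_le1.
have := expR_ge1Dx y; have := expR_mul_expRN y; have := expR_gt0 (- y).
set E := expR y; set E' := expR (- y) => E'_gt0 EE' E_ge.
have : E' * (1 + y) <= 1 by nra.
nra.
Qed.

Lemma expR_sub1_mul_ge (k w : R) : 0 <= k -> `|k * w| <= 1 / 6 ->
  5 / 6 * k * w ^+ 2 <= (expR (k * w) - 1) * w.
Proof.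
move=> k_ge0 kw_le.
have := expR_ge1Dx (k * w); have := expR_ge1Dx (- (k * w)).
have := expR_mul_expRN (k * w); have := expR_gt0 (k * w).
set E := expR (k * w); set E' := expR (- (k * w)) => E_gt0 EE' E'_ge E_ge.
have kw2_ge0 : 0 <= k * w ^+ 2 by rewrite mulr_ge0 ?sqr_ge0.
have [w_ge0|w_lt0] := leP 0 w.
  have : 0 <= (E - 1 - k * w) * w by rewrite mulr_ge0 //; lra.
  nra.
have kw_ge : - (k * w) <= 1 / 6 by apply: le_trans kw_le; rewrite -normrN ler_norm.
have kw_le0 : 0 <= - (k * w) by nra.
have : 5 / 6 * (- (k * w)) <= 1 - E by nra.
nra.
Qed.

Lemma finite_pos_lower_bound (T : finType) (P : pred T) (f : T -> R) :
  (forall a, P a -> 0 < f a) -> exists2 m : R, 0 < m & forall a, P a -> m <= f a.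
Proof.
move=> f_gt0; exists (\big[Order.min/1]_(a | P a) f a).
  by elim/big_ind: _ => //= x y x_gt0 y_gt0; rewrite lt_min x_gt0 y_gt0.
by move=> a Pa; rewrite (bigD1 a) //= ge_min lexx.
Qed.

Lemma geometric_decay_lt (u : nat -> R) (k d : R) : 0 < k -> 0 < d ->
  (forall n, 0 <= u n) -> (forall n, u n.+1 <= (1 - k) * u n) -> exists n, u n < d.
Proof.
move=> k_gt0 d_gt0 u_ge0 u_step.
have bound n : u n * (1 + n%:R * k) <= u 0%N.
  elim: n => [|n IH]; first by rewrite mul0r addr0 mulr1.
  apply: le_trans IH; rewrite -natr1.
  have c_ge0 : 0 <= 1 + (n%:R + 1) * k by rewrite addr_ge0 // mulr_ge0 // ltW.
  have := ler_wpM2r c_ge0 (u_step n).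
  have : 0 <= u n * ((n%:R + 1) * k ^+ 2).
    by rewrite mulr_ge0 // mulr_ge0 ?sqr_ge0 // addr_ge0.
  nra.
have [n n_gt] : exists n, u 0%N / (d * k) < n%:R.
  exists (Num.Def.archi_bound (u 0%N / (d * k))).
  by apply: archi_boundP; rewrite divr_ge0 // ltW ?mulr_gt0.
exists n; rewrite ltNge; apply/negP => d_le.
have dk_gt0 : 0 < d * k by rewrite mulr_gt0.
rewrite ltr_pdivrMr // in n_gt.
have c_ge0 : 0 <= 1 + n%:R * k by rewrite addr_ge0 // mulr_ge0 // ltW.
have := bound n; have := ler_wpM2r c_ge0 d_le; nra.
Qed.

End RealInequalities.

Section Bandit.
Variables (R : realType) (K : nat) (r : 'I_K -> R) (astar : 'I_K).
Hypothesis K_gt1 : (1 < K)%N.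
Hypothesis r_bounded : forall a, 0 <= r a <= 1.
Hypothesis r_max : forall a, a != astar -> r a < r astar.
Implicit Types (th x : 'I_K -> R) (L g : R).

Let K_gt0 : (0 < K)%N := ltnW K_gt1.
Local Notation step := (npg_step r (1 / 6)).
Local Notation N th := (norm2 (grad (value r) th)).

Lemma exists_suboptimal : exists b : 'I_K, b != astar.
Proof.
have [->|ne] := eqVneq astar (Ordinal K_gt0); last by exists (Ordinal K_gt0); rewrite eq_sym.
by exists (Ordinal K_gt1); rewrite -val_eqE.
Qed.

Lemma value_le1 th : value r th <= 1.
Proof.
rewrite -(sum_softmax K_gt0 th); apply: ler_sum => a _.
by apply: ler_piMr; [exact: softmax_ge0 | case/andP: (r_bounded a)].
Qed.

Lemma gap_value th : gap r astar th = r astar - value r th.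
Proof.
rewrite /gap; under eq_bigr => a _ do rewrite mulrBl.
rewrite sumrB (bigD1 astar) //= /point_mass eqxx mul1r big1 ?addr0 // => a /negbTE ->.
by rewrite mul0r.
Qed.

Lemma gap_weighted th : gap r astar th = \sum_(a < K) softmax th a * (r astar - r a).
Proof.
under eq_bigr => a _ do rewrite mulrBr.
by rewrite sumrB -mulr_suml (sum_softmax K_gt0) mul1r gap_value.
Qed.

Lemma gap_gt0 th : 0 < gap r astar th.
Proof.
rewrite gap_weighted; have [b b_neq] := exists_suboptimal.
rewrite (bigD1 b) //= ltr_pwDl //; first by rewrite mulr_gt0 ?softmax_gt0 ?subr_gt0 ?r_max.
apply: sumr_ge0 => a _; rewrite mulr_ge0 ?softmax_ge0 // subr_ge0.
by have [->|/r_max/ltW] := eqVneq a astar.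
Qed.

Lemma value_lt_max th : value r th < r astar.
Proof. by rewrite -subr_gt0 -gap_value gap_gt0. Qed.

Lemma softmax_gap_le_norm_grad th : softmax th astar * gap r astar th <= N th.
Proof.
by rewrite gap_value -(grad_value r K_gt0); apply: le_trans (abs_le_norm2 _ astar); exact: ler_norm.
Qed.

Lemma norm_grad_gt0 th : 0 < N th.
Proof.
apply: lt_le_trans (softmax_gap_le_norm_grad th).
by rewrite mulr_gt0 ?softmax_gt0 ?gap_gt0.
Qed.

Lemma sum_softmax_expR_le th x : (forall a, x a <= 1 / 6) ->
  \sum_(a < K) softmax th a * expR (x a) <= 6 / 5.
Proof.
move=> x_le; apply: le_trans (expR_1_6_le R).
have -> : expR (1 / 6) = \sum_(a < K) softmax th a * expR (1 / 6 : R).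
  by rewrite -mulr_suml (sum_softmax K_gt0 th); ring.
by apply: ler_sum => a _; rewrite ler_wpM2l ?softmax_ge0 // ler_expR.
Qed.

Lemma value_npg_step_gain th : N th / 12 <= value r (step th) - value r th.
Proof.
have N_gt0 := norm_grad_gt0 th.
set N := N th in N_gt0 *; set p := value r th.
pose x a := 1 / 6 * (grad (value r) th a / N).
have xE a : x a = softmax th a / (6 * N) * (r a - p).
  by rewrite /x (grad_value r K_gt0) -/p; field; rewrite gt_eqF.
have x_le a : `|x a| <= 1 / 6.
  rewrite /x normrM ger0_norm // ler_piMr // normf_div (gtr0_norm N_gt0).
  by rewrite ler_pdivrMr // mul1r abs_le_norm2.
have -> : step th = (fun a => th a + x a) by [].
rewrite (value_shift r K_gt0) -/p.
set D := \sum_(a < K) softmax th a * expR (x a).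
have D_gt0 : 0 < D by apply: sum_ord_gt0 => // a; rewrite mulr_gt0 ?softmax_gt0 ?expR_gt0.
have D_le : D <= 6 / 5.
  by apply: sum_softmax_expR_le => a; apply: le_trans (ler_norm _) (x_le a).
have num_ge : 5 / 36 * N <= \sum_(a < K) softmax th a * expR (x a) * (r a - p).
  have -> : \sum_(a < K) softmax th a * expR (x a) * (r a - p) =
      \sum_(a < K) softmax th a * ((expR (x a) - 1) * (r a - p)).
    have -> : \sum_(a < K) softmax th a * ((expR (x a) - 1) * (r a - p)) =
        \sum_(a < K) softmax th a * expR (x a) * (r a - p) -
        \sum_(a < K) softmax th a * (r a - p).
      by rewrite -sumrB; apply: eq_bigr => a _; ring.
    by rewrite (sum_softmax_centered r K_gt0) subr0.
  have -> : 5 / 36 * N = \sum_(a < K) 5 / 36 * (grad (value r) th a ^+ 2 / N).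
    by rewrite -mulr_sumr -mulr_suml -norm2_sqr -/N; field; rewrite gt_eqF.
  apply: ler_sum => a _.
  have k_ge0 : 0 <= softmax th a / (6 * N) by rewrite divr_ge0 ?softmax_ge0 // ltW ?mulr_gt0.
  have := expR_sub1_mul_ge (w := r a - p) k_ge0; rewrite -xE => /(_ (x_le a)) h.
  rewrite (grad_value r K_gt0) -/p.
  have -> : 5 / 36 * ((softmax th a * (r a - p)) ^+ 2 / N) =
      softmax th a * (5 / 6 * (softmax th a / (6 * N)) * (r a - p) ^+ 2).
    by field; rewrite gt_eqF.
  by rewrite ler_wpM2l ?softmax_ge0.
rewrite ler_pdivlMr //; apply: le_trans num_ge.
have : N / 12 * D <= N / 12 * (6 / 5) by rewrite ler_wpM2l // divr_ge0 // ltW.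
lra.
Qed.

Lemma gap_npg_step th :
  gap r astar (step th) <= (1 - softmax th astar / 12) * gap r astar th.
Proof.
have := value_npg_step_gain th.
have := softmax_gap_le_norm_grad th.
rewrite !gap_value; lra.
Qed.

Lemma value_npg_step_ge th : value r th <= value r (step th).
Proof.
have := value_npg_step_gain th; have := norm_grad_gt0 th.
lra.
Qed.

(* Equal to sum_{r_a < L} pi_a / pi(astar) (see expR_sub_softmax). *)
Definition low_logit_mass L th := \sum_(a < K | r a < L) expR (th a - th astar).

Lemma low_logit_mass_ge th L : value r th <= L -> L < r astar ->
  r astar - L <= low_logit_mass L th.
Proof.
move=> value_le L_lt.
have pi_gt0 := softmax_gt0 K_gt0 th astar.
rewrite /low_logit_mass; under eq_bigr => a _ do rewrite expR_sub_softmax //.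
rewrite -mulr_suml ler_pdivlMr //.
have : 0 <= \sum_(a < K) softmax th a * (L - r a).
  under eq_bigr => a _ do rewrite mulrBr.
  by rewrite sumrB -mulr_suml (sum_softmax K_gt0) mul1r subr_ge0.
rewrite (bigID (fun a => r a < L)) /=.
have high_le : \sum_(a < K | ~~ (r a < L)) softmax th a * (L - r a) <=
    softmax th astar * (L - r astar).
  rewrite (bigD1 astar) /=; last by rewrite -leNgt ltW.
  rewrite gerDl; apply: sumr_le0 => a /andP[/negbTE a_high _].
  by rewrite mulr_ge0_le0 ?softmax_ge0 // subr_le0 leNgt a_high.
have low_le : \sum_(a < K | r a < L) softmax th a * (L - r a) <=
    \sum_(a < K | r a < L) softmax th a.
  apply: ler_sum => a a_low; rewrite ler_piMr ?softmax_ge0 //.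
  by have := r_bounded a; have := r_bounded astar; lra.
nra.
Qed.

Lemma norm_grad_le_low_mass th L : value r th <= L ->
  (forall a, r a < L -> r a <= value r th) ->
  N th <= 2 * \sum_(a < K | r a < L) softmax th a.
Proof.
move=> value_le low_le; set p := value r th in value_le low_le.
pose G := grad (value r) th.
have G_sum0 : \sum_(a < K) G a = 0.
  rewrite -[RHS](sum_softmax_centered r K_gt0 th).
  by apply: eq_bigr => a _; rewrite /G (grad_value r K_gt0).
have low_absG a : r a < L -> `|G a| = - G a.
  move=> /low_le a_le; rewrite ler0_norm // /G (grad_value r K_gt0) -/p.
  by rewrite mulr_ge0_le0 ?softmax_ge0 // subr_le0.
have high_absG a : ~~ (r a < L) -> `|G a| = G a.
  rewrite -leNgt => a_ge; rewrite ger0_norm // /G (grad_value r K_gt0) -/p.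
  by rewrite mulr_ge0 ?softmax_ge0 // subr_ge0 (le_trans value_le).
have low_negG : \sum_(a < K | r a < L) - G a <= \sum_(a < K | r a < L) softmax th a.
  apply: ler_sum => a _; rewrite /G (grad_value r K_gt0) -/p -mulrN opprB ler_piMr ?softmax_ge0 //.
  by have := r_bounded a; have := value_le1 th; rewrite -/p; lra.
apply: le_trans (norm2_le_sum_abs G) _.
rewrite (bigID (fun a => r a < L)) /= (eq_bigr _ low_absG) (eq_bigr _ high_absG).
rewrite (bigID (fun a => r a < L)) /= in G_sum0.
rewrite sumrN in low_negG *; lra.
Qed.

Lemma npg_step_logit_diff_le th a g : r a - value r th <= - g ->
  step th a - step th astar <= th a - th astar - softmax th a * g / (6 * N th).
Proof.
move=> a_low; have N_gt0 := norm_grad_gt0 th.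
have Gstar_gt0 : 0 < grad (value r) th astar.
  by rewrite (grad_value r K_gt0) mulr_gt0 ?softmax_gt0 // subr_gt0 value_lt_max.
have Ga_le : grad (value r) th a <= - (softmax th a * g).
  by rewrite (grad_value r K_gt0) -mulrN ler_wpM2l ?softmax_ge0.
have -> : step th a - step th astar =
    th a - th astar + (grad (value r) th a - grad (value r) th astar) / (6 * N th).
  by rewrite /npg_step; field; rewrite gt_eqF.
rewrite lerD2l -mulNr ler_pM2r ?invr_gt0 ?mulr_gt0 //; lra.
Qed.

Lemma expR_npg_step_logit_le th a g : 0 <= g -> r a - value r th <= - g ->
  expR (step th a - step th astar) <=
  softmax th a / softmax th astar -
    g / (12 * N th * softmax th astar) * softmax th a ^+ 2.
Proof.
move=> g_ge0 a_low; have N_gt0 := norm_grad_gt0 th.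
have q_gt0 := softmax_gt0 K_gt0 th astar.
set y := softmax th a * g / (6 * N th).
have y_ge0 : 0 <= y.
  by apply: divr_ge0; [exact: mulr_ge0 (softmax_ge0 K_gt0 th a) g_ge0 | rewrite mulr_ge0 // ltW].
have y_le1 : y <= 1.
  have pa_g_le : softmax th a * g <= N th.
    apply: le_trans (abs_le_norm2 _ a); rewrite (grad_value r K_gt0).
    rewrite -normrN -mulrN; apply: le_trans (ler_norm _).
    by rewrite ler_wpM2l ?softmax_ge0 //; lra.
  by rewrite /y ler_pdivrMr ?mulr_gt0 // mul1r; lra.
apply: (@le_trans _ _ (expR (th a - th astar) * (1 - y / 2))).
  apply: (@le_trans _ _ (expR (th a - th astar - y))).
    by rewrite ler_expR; exact: npg_step_logit_diff_le.
  by rewrite expRD ler_wpM2l ?expR_ge0 ?expRN_le ?y_ge0.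
rewrite (expR_sub_softmax K_gt0) /y le_eqVlt; apply/orP; left; apply/eqP.
by field; rewrite !gt_eqF.
Qed.

Lemma low_logit_mass_npg_step th L g : 0 < g ->
  (forall a, r a < L -> g <= L - r a) ->
  value r th <= L -> L - g / 2 < value r th ->
  low_logit_mass L (step th) <= (1 - g / (48 * K%:R)) * low_logit_mass L th.
Proof.
move=> g_gt0 low_sep value_le value_gt.
have N_gt0 := norm_grad_gt0 th; have q_gt0 := softmax_gt0 K_gt0 th astar.
have K_gt0R : 0 < (K%:R : R) by rewrite ltr0n.
set N := N th in N_gt0; set q := softmax th astar in q_gt0.
set p := value r th in value_le value_gt.
have low_below a : r a < L -> r a - p <= - (g / 2) by move/low_sep; lra.
set P := \sum_(a < K | r a < L) softmax th a.
have P_ge0 : 0 <= P by apply: sumr_ge0 => a _; exact: softmax_ge0.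
have N_le : N <= 2 * P.
  by apply: norm_grad_le_low_mass => // a /low_below; rewrite -/p; lra.
have g2_ge0 : 0 <= g / 2 by rewrite divr_ge0 // ltW.
have c_gt0 : 0 < g / 2 / (12 * N * q) by rewrite !divr_gt0 // mulr_gt0 // mulr_gt0.
rewrite [X in X <= _]/low_logit_mass.
apply: le_trans (ler_sum _ (fun a a_low => expR_npg_step_logit_le g2_ge0 (low_below a a_low))) _.
rewrite sumrB -mulr_suml -mulr_sumr -/P -/N -/q.
have -> : low_logit_mass L th = P / q.
  by rewrite /P mulr_suml; apply: eq_bigr => a _; rewrite (expR_sub_softmax K_gt0).
have := ler_wpM2l (ltW c_gt0) (sqr_sum_le_card_sum_sqr (fun a => r a < L) (softmax th) K_gt0).
rewrite -/P.
have : g / (48 * K%:R) * (P / q) <= g / 2 / (12 * N * q) * (P ^+ 2 / K%:R).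
  have -> : g / 2 / (12 * N * q) * (P ^+ 2 / K%:R) = g / (48 * K%:R) * (P / q) * (2 * P / N).
    by field; rewrite !gt_eqF.
  apply: ler_peMr; last by rewrite ler_pdivlMr // mul1r.
  have K48_gt0 : 0 < 48 * (K%:R : R) by rewrite mulr_gt0.
  by apply: mulr_ge0; apply: divr_ge0 => //; exact: ltW.
lra.
Qed.

Section Trajectory.
Variable theta : nat -> 'I_K -> R.
Hypothesis theta_step : forall t, (1 <= t)%N -> theta t.+1 = step (theta t).

Lemma value_trajectory_le s t : (1 <= s <= t)%N -> value r (theta s) <= value r (theta t).
Proof.
case/andP=> s_ge1; elim: t => [|t IH]; first by rewrite leqn0 => /eqP->.
rewrite leq_eqVlt => /predU1P[<- //|s_le_t].
apply: le_trans (IH s_le_t) _; rewrite theta_step ?(leq_trans s_ge1) //.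
by have := value_npg_step_ge (theta t).
Qed.

Lemma value_trajectory_ub_ge L :
  (forall t, (1 <= t)%N -> value r (theta t) <= L) -> r astar <= L.
Proof.
move=> L_ub; pose E := [set value r (theta t) | t in [set t : nat | (1 <= t)%N]].
have E_sup : has_sup E.
  by split; [exists (value r (theta 1)), 1%N | exists L => _ [t t_ge1 <-]; exact: L_ub].
have sup_ub t : (1 <= t)%N -> value r (theta t) <= sup E.
  by move=> t_ge1; apply: sup_upper_bound => //; exists t.
have sup_le : sup E <= L by apply: ge_sup => [|_ [t t_ge1 <-]]; [case: E_sup | exact: L_ub].
apply: le_trans sup_le.
rewrite leNgt; apply/negP => sup_lt; set L' := sup E in sup_ub sup_lt.
have [g g_gt0 low_sep] := @finite_pos_lower_bound _ _ (fun a => r a < L') (fun a => L' - r a)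
  (fun a a_low => ltac:(by rewrite subr_gt0)).
have g2_gt0 : 0 < g / 2 by rewrite divr_gt0.
have [_ [t0 t0_ge1 <-] t0_close] := sup_adherent g2_gt0 E_sup.
have t0n_ge1 n : (1 <= t0 + n)%N by rewrite (leq_trans t0_ge1) ?leq_addr.
pose u n := low_logit_mass L' (theta (t0 + n)).
have u_step n : u n.+1 <= (1 - g / (48 * K%:R)) * u n.
  rewrite /u addnS theta_step //; apply: low_logit_mass_npg_step => //.
    exact: sup_ub.
  apply: lt_le_trans t0_close _; apply: value_trajectory_le.
  by rewrite t0_ge1 leq_addr.
have u_ge0 n : 0 <= u n by apply: sumr_ge0 => a _; rewrite expR_ge0.
have k_gt0 : 0 < g / (48 * K%:R) by rewrite divr_gt0 // mulr_gt0 // ltr0n.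
have d_gt0 : 0 < r astar - L' by rewrite subr_gt0.
have [n] := geometric_decay_lt k_gt0 d_gt0 u_ge0 u_step.
by rewrite ltNge => /negP; apply; apply: low_logit_mass_ge => //; exact: sup_ub.
Qed.

Lemma gap_trajectory_lt eps : 0 < eps -> exists2 t, (1 <= t)%N & gap r astar (theta t) < eps.
Proof.
move=> eps_gt0; have [//|no_t] := pselect (exists2 t, (1 <= t)%N & gap r astar (theta t) < eps).
suff : r astar <= r astar - eps by lra.
apply: value_trajectory_ub_ge => t t_ge1.
have : ~~ (gap r astar (theta t) < eps) by apply/negP => gap_lt; apply: no_t; exists t.
rewrite -leNgt gap_value; lra.
Qed.

Lemma gap_ge_suboptimal_mass th D : (forall a, a != astar -> D <= r astar - r a) ->
  (1 - softmax th astar) * D <= gap r astar th.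
Proof.
move=> D_le; rewrite gap_weighted (bigD1 astar) //= subrr mulr0 add0r.
have -> : 1 - softmax th astar = \sum_(a < K | a != astar) softmax th a.
  by have := sum_softmax K_gt0 th; rewrite (bigD1 astar) //= => sum1; lra.
by rewrite mulr_suml; apply: ler_sum => a /D_le; apply: ler_wpM2l; exact: softmax_ge0.
Qed.

Lemma softmax_opt_trajectory_gt_half :
  exists2 t0, (1 <= t0)%N & forall t, (t0 <= t)%N -> 1 / 2 < softmax (theta t) astar.
Proof.
have [D D_gt0 D_le] := @finite_pos_lower_bound _ _ (fun a => a != astar)
  (fun a => r astar - r a) (fun a a_sub => ltac:(by rewrite subr_gt0 r_max)).
have [t0 t0_ge1 gap_lt] := gap_trajectory_lt (divr_gt0 D_gt0 (ltr0n _ 2)).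
exists t0 => // t t0_le.
have gap_le : gap r astar (theta t) <= gap r astar (theta t0).
  by rewrite !gap_value lerD2l lerN2 value_trajectory_le // t0_ge1.
have := gap_ge_suboptimal_mass (theta t) D_le => mass_le.
have : (1 - softmax (theta t) astar) * D < 1 / 2 * D by lra.
by rewrite ltr_pM2r //; lra.
Qed.

Lemma inf_softmax_opt_trajectory_gt0 :
  0 < inf [set softmax (theta t) astar | t in [set t : nat | (1 <= t)%N]].
Proof.
have [t0 t0_ge1 late_gt] := softmax_opt_trajectory_gt_half.
have [m m_gt0 early_ge] := @finite_pos_lower_bound _ 'I_t0 predT
  (fun i => softmax (theta i) astar) (fun i _ => softmax_gt0 K_gt0 _ _).
apply: (@lt_le_trans _ _ (Order.min (1 / 2) m)); first by rewrite lt_min m_gt0 andbT.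
apply: lb_le_inf; first by exists (softmax (theta 1) astar), 1%N.
move=> _ [t t_ge1 <-]; rewrite ge_min.
have [t_lt|t_ge] := ltnP t t0; first by rewrite (early_ge (Ordinal t_lt)) ?orbT.
by rewrite ltW ?late_gt.
Qed.

Lemma gap_trajectory_le c : (forall t, (1 <= t)%N -> c <= softmax (theta t) astar) ->
  forall n, gap r astar (theta n.+1) <= expR (- (c * n%:R) / 12) * gap r astar (theta 1).
Proof.
move=> c_le; elim=> [|n IH]; first by rewrite mulr0 oppr0 mul0r expR0 mul1r.
have contract : gap r astar (theta n.+2) <= expR (- c / 12) * gap r astar (theta n.+1).
  rewrite theta_step //; apply: le_trans (gap_npg_step _) _.
  apply: ler_wpM2r; first exact/ltW/gap_gt0.
  by have := expR_ge1Dx (- c / 12); have := c_le n.+1 isT; lra.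
have -> : expR (- (c * n.+1%:R) / 12) = expR (- c / 12) * expR (- (c * n%:R) / 12).
  by rewrite -expRD -natr1; congr expR; ring.
by rewrite -mulrA; apply: le_trans contract (ler_wpM2l (expR_ge0 _) IH).
Qed.

End Trajectory.

End Bandit.

Theorem theorem2 (R : realType) (K : nat) (hK : (2 <= K)%N)
  (r : 'I_K -> R) (hr : forall a, 0 <= r a <= 1)
  (astar : 'I_K) (hmax : forall a, a != astar -> r a < r astar)
  (theta : nat -> ('I_K -> R))
  (hstep : forall t, (1 <= t)%N -> theta t.+1 = npg_step r (1 / 6) (theta t)) :
  let c := inf [set softmax (theta t) astar | t in [set t : nat | (1 <= t)%N]] in
  0 < c /\
  forall t, (1 <= t)%N ->
    gap r astar (theta t) <= expR (- (c * (t - 1)%:R) / 12) * gap r astar (theta 1%N).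
Proof.
move=> c; split; first exact: (inf_softmax_opt_trajectory_gt0 hK hr hmax hstep).
have c_le t : (1 <= t)%N -> c <= softmax (theta t) astar.
  move=> t_ge1; apply: ge_inf; last by exists t.
  by exists 0 => _ [s _ <-]; exact: softmax_ge0 (ltnW hK) _ _.
case=> [//|n] _; rewrite subn1.
exact: (gap_trajectory_le hK hmax hstep c_le n).
Qed.
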